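(* Define $\psi:\mathbb R^5\to\mathbb R$ by \[ \begin{aligned} \psi(w_0,w_1,w_2,w_3,w_4)&=-\tfrac12w_0^2+\tfrac92(w_3^2+w_4^2)+\sqrt6\,w_0(w_3^2+w_4^2)+\tfrac{3\sqrt6}{2}w_4(w_2^2-w_1^2)\\ &\quad-3\sqrt6\,w_1w_2w_3-\tfrac{\sqrt6}{2}w_0(w_1^2+w_2^2)-\tfrac{\sqrt6}{9}w_0^3. \end{aligned} \] Then for all $(w_0,w_1,w_2,w_3,w_4)\in\mathbb R^5$, \[ \psi(w_0,w_1,w_2,w_3,w_4)\ge\psi\left(w_0,\sqrt{w_1^2+w_2^2},0,0,\sqrt{w_3^2+w_4^2}\right). \] *)

From Stdlib Require Import Reals Lra.
Open Scope R_scope.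

Definition psi (w0 w1 w2 w3 w4 : R) : R :=
  - (1/2) * w0^2 + (9/2) * (w3^2 + w4^2) + sqrt 6 * w0 * (w3^2 + w4^2)
  + (3 * sqrt 6 / 2) * w4 * (w2^2 - w1^2)
  - 3 * sqrt 6 * w1 * w2 * w3
  - (sqrt 6 / 2) * w0 * (w1^2 + w2^2)
  - (sqrt 6 / 9) * w0^3.

(* The only term of psi that is not a function of w0, w1^2 + w2^2 and
   w3^2 + w4^2 is the cubic coupling w4 (w2^2 - w1^2) - 2 w1 w2 w3.  It is the
   inner product of (w4, w3) with the coordinates of -(w1 + i w2)^2, a vector
   of length w1^2 + w2^2, so by Cauchy-Schwarz it is at least
   -sqrt(w3^2 + w4^2) (w1^2 + w2^2); the reduced point attains this bound. *)
From Stdlib Require Import Reals Lra Psatz.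
Open Scope R_scope.

Definition psi_radial (w0 r2 s2 : R) : R :=
  - (1/2) * w0^2 + (9/2) * s2 + sqrt 6 * w0 * s2
  - (sqrt 6 / 2) * w0 * r2 - (sqrt 6 / 9) * w0^3.

Definition coupling (w1 w2 w3 w4 : R) : R :=
  w4 * (w2^2 - w1^2) - 2 * w1 * w2 * w3.

Lemma psi_radial_coupling (w0 w1 w2 w3 w4 : R) :
  psi w0 w1 w2 w3 w4 =
  psi_radial w0 (w1^2 + w2^2) (w3^2 + w4^2)
  + (3 * sqrt 6 / 2) * coupling w1 w2 w3 w4.
Proof. unfold psi, psi_radial, coupling; field. Qed.

Lemma coupling_Lagrange (w1 w2 w3 w4 : R) :
  (w3^2 + w4^2) * (w1^2 + w2^2)^2 =
  (coupling w1 w2 w3 w4)^2 + (2 * w1 * w2 * w4 + w3 * (w2^2 - w1^2))^2.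
Proof. unfold coupling; ring. Qed.

Lemma Rabs_coupling_le (w1 w2 w3 w4 : R) :
  Rabs (coupling w1 w2 w3 w4) <= sqrt (w3^2 + w4^2) * (w1^2 + w2^2).
Proof.
  assert (Hr2 : 0 <= w1^2 + w2^2) by nra.
  rewrite <- (sqrt_pow2 (w1^2 + w2^2)) by exact Hr2.
  rewrite <- sqrt_mult by nra.
  rewrite <- sqrt_Rsqr_abs; unfold Rsqr.
  apply sqrt_le_1_alt.
  rewrite coupling_Lagrange.
  pose proof (pow2_ge_0 (2 * w1 * w2 * w4 + w3 * (w2^2 - w1^2))).
  lra.
Qed.

Lemma coupling_reduced (p q : R) :
  0 <= p -> coupling (sqrt p) 0 0 (sqrt q) = - (sqrt q * p).
Proof.
  intro Hp; unfold coupling.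
  rewrite pow2_sqrt by exact Hp.
  ring.
Qed.

Lemma sqrt_sum_sq_sq (x y : R) : (sqrt (x^2 + y^2))^2 + 0^2 = x^2 + y^2.
Proof. rewrite pow2_sqrt by nra; ring. Qed.

Theorem lemma4p1 (w0 w1 w2 w3 w4 : R) :
  psi w0 w1 w2 w3 w4 >=
  psi w0 (sqrt (w1^2 + w2^2)) 0 0 (sqrt (w3^2 + w4^2)).
Proof.
  rewrite !psi_radial_coupling, !sqrt_sum_sq_sq.
  rewrite (Rplus_comm (0^2)), sqrt_sum_sq_sq.
  rewrite coupling_reduced by nra.
  pose proof (Rabs_coupling_le w1 w2 w3 w4) as Hbound.
  pose proof (Rle_abs (- coupling w1 w2 w3 w4)) as Hneg.
  rewrite Rabs_Ropp in Hneg.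
  assert (H6 : 0 < sqrt 6) by (apply sqrt_lt_R0; lra).
  nra.
Qed.
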